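(* Let $p$ be an odd prime, $\chi$ a Dirichlet character with odd conductor $f$, and $n,n',c,k$ positive integers with $n\equiv n'\pmod{p-1}$ and $c\equiv0\pmod{p-1}$. Then $$\Delta_c^k\epsilon_{n,\chi}\equiv\Delta_c^k\epsilon_{n',\chi}\pmod{p^{k+1}\mathbb Z_p[\chi]},$$ where $\Delta_c^k a_n=\sum_{j=0}^k\binom kj(-1)^{k-j}a_{n+jc}$.
   Context: $\mathbb Z_p[\chi]$ is the ring generated over $\mathbb Z_p$ by the values of $\chi$. For a primitive Dirichlet character $\psi$ of odd conductor $f_\psi$, $E_{n,\psi}$ is defined by $2\sum_{a=1}^{f_\psi}\frac{(-1)^a\psi(a)e^{at}}{e^{f_\psi t}+1}=\sum_{n\ge0}E_{n,\psi}\frac{t^n}{n!}$. Let $\omega$ be the Teichmüller character mod $p$. For $n\ge0$, $\chi_n$ is the primitive Dirichlet character associated with $a\mapsto\chi(a)\omega^{-n}(a)$ on $(\mathbb Z/\mathrm{lcm}(f,p)\mathbb Z)^\times$, and $\epsilon_{n,\chi}=(1-\chi_n(p)p^n)E_{n,\chi_n}$. *)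

(* All algebraic numbers live in algC (algebraic complex
   numbers); the p-adic side is encoded by a valuation v on algC extending
   the p-adic valuation of Q (equivalently, a fixed embedding Qbar -> C_p). *)
From HB Require Import structures.
From mathcomp Require Import all_boot all_order all_algebra all_field.
Set Implicit Arguments. Unset Strict Implicit. Unset Printing Implicit Defensive.
Import Order.TTheory GRing.Theory Num.Theory.
Local Open Scope ring_scope.

(* v : algC -> rat is a (rank-one) valuation on algC restricting to the
   p-adic valuation on Q (normalized v p = 1).  The value at 0 is
   irrelevant (conventionally +oo) and never used. *)
Definition padic_valuation (p : nat) (v : algC -> rat) : Prop :=
  [/\ forall x y : algC, x != 0 -> y != 0 -> v (x * y) = v x + v y,
      forall x y : algC, x != 0 -> y != 0 -> x + y != 0 ->
        Num.min (v x) (v y) <= v (x + y)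
    & v p%:R = 1].

(* x = y  mod p^m O  where O is the valuation ring of v
   (restricted to Q_p(chi) this is Z_p[chi]). *)
Definition cong_mod_pow (v : algC -> rat) (m : nat) (x y : algC) : Prop :=
  x = y \/ (m%:Q <= v (x - y)).

Definition dirichlet_char (N : nat) (chi : nat -> algC) : Prop :=
  [/\ (0 < N)%N,
      forall a b, chi (a * b)%N = chi a * chi b,
      forall a, chi (a + N)%N = chi a
    & forall a, (chi a != 0) = coprime a N].

Definition primitive_char (N : nat) (chi : nat -> algC) : Prop :=
  dirichlet_char N chi /\
  forall d : nat, (d %| N)%N -> (d < N)%N ->
    ~ (forall a, coprime a N -> a = 1 %[mod d] -> chi a = 1).

Definition teichmuller (p : nat) (v : algC -> rat) (omega : nat -> algC) : Prop :=
  forall a : nat,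
    ((p %| a)%N -> omega a = 0) /\
    (~~ (p %| a)%N -> omega a ^+ p.-1 = 1 /\
                    (omega a = a%:R \/ 0 < v (omega a - a%:R))).

Definition assoc_primitive (p f : nat) (chi omega : nat -> algC)
    (chin : nat -> nat -> algC) (fn : nat -> nat) : Prop :=
  forall m : nat, primitive_char (fn m) (chin m) /\
    forall a : nat, coprime a (lcmn f p) -> chin m a = chi a * (omega a) ^- m.

(* Generalized Euler numbers E_{n,psi}, defined by
   2 sum_{a=1}^{F} (-1)^a psi(a) e^{at} / (e^{Ft}+1) = sum_n E_{n,psi} t^n/n!.
   Multiplying by (e^{Ft}+1) and comparing coefficients of t^m/m! gives
   sum_{i<=m} C(m,i) F^{m-i} E_i + E_m = 2 sum_{a=1}^F (-1)^a psi(a) a^m,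
   i.e. the recursion below. *)
Definition euler_rhs (psi : nat -> algC) (F m : nat) : algC :=
  \sum_(1 <= a < F.+1) (-1) ^+ a * psi a * (a%:R) ^+ m.

Fixpoint euler_seq (psi : nat -> algC) (F m : nat) : seq algC :=
  match m with
  | 0 => [:: euler_rhs psi F 0]
  | m'.+1 =>
      let s := euler_seq psi F m' in
      rcons s (euler_rhs psi F m'.+1 -
               2^-1 * \sum_(i < m'.+1) 'C(m'.+1, i)%:R * (F%:R) ^+ (m'.+1 - i)
                                        * nth 0 s i)
  end.

Definition gen_euler (psi : nat -> algC) (F n : nat) : algC :=
  nth 0 (euler_seq psi F n) n.

Definition eps (p : nat) (chin : nat -> nat -> algC) (fn : nat -> nat) (m : nat) : algC :=
  (1 - chin m p * (p%:R) ^+ m) * gen_euler (chin m) (fn m) m.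

Definition Delta (c k : nat) (a : nat -> algC) (n : nat) : algC :=
  \sum_(j < k.+1) 'C(k, j)%:R * (-1) ^+ (k - j) * a (n + j * c)%N.

From HB Require Import structures.
From mathcomp Require Import all_boot all_order all_algebra all_field.
From mathcomp Require Import cyclic zify ring.
Set Implicit Arguments. Unset Strict Implicit. Unset Printing Implicit Defensive.
Import Order.TTheory GRing.Theory Num.Theory.
Local Open Scope ring_scope.

(** Let [L = lcm(f, p)] and [M = L p^(k+1)].  Summing the generating function
   of [E_(m,chi_m)] over an odd multiple of the conductor of [chi_m] shows
   [eps_(m,chi) = T_m] modulo [p^(k+1)] for [m >= 1], where
   [T_m = sum_(a <= M, p not dividing a) (-1)^a chi_m(a) a^m].
   For such [a] we have [chi_m(a) = chi(a) omega(a)^-m], because the conductor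
   of [chi_m] divides [L] and contains every prime factor of [f] other than
   [p].  As [omega(a)^(p-1) = 1] and [p - 1] divides [c], the binomial theorem
   gives [Delta_c^k T_n = sum_a (-1)^a chi(a) omega(a)^-n a^n (a^c - 1)^k].
   By Fermat [a^c = 1] and [a^n = a^n'] modulo [p], so [Delta_c^k T_n] and
   [Delta_c^k T_n'] agree modulo [p^(k+1)]. *)

Definition val_ge (v : algC -> rat) (r : rat) (x : algC) := x = 0 \/ r <= v x.

Section Valuation.
Variables (p : nat) (v : algC -> rat).
Hypothesis hv : padic_valuation p v.

Lemma pvalM x y : x != 0 -> y != 0 -> v (x * y) = v x + v y.
Proof. by case: hv => vM _ _; apply: vM. Qed.

Lemma pvalp : v p%:R = 1.
Proof. by case: hv. Qed.

Lemma pval1 : v 1 = 0.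
Proof.
have /eqP := pvalM (oner_neq0 algC) (oner_neq0 algC).
by rewrite mulr1 -subr_eq subrr eq_sym => /eqP.
Qed.

Lemma pvalX x n : x != 0 -> v (x ^+ n) = v x *+ n.
Proof.
move=> x0; elim: n => [|n IH]; first by rewrite expr0 pval1.
by rewrite exprS pvalM ?expf_neq0 // IH mulrS.
Qed.

Lemma pval_unity x n : (0 < n)%N -> x ^+ n = 1 -> v x = 0.
Proof.
move=> n0 xn1; have x0 : x != 0.
  by apply: contra_eq_neq xn1 => ->; case: n n0 => // n _; rewrite exprS mul0r eq_sym oner_neq0.
have /esym/eqP := pvalX n x0; rewrite xn1 pval1 mulrn_eq0.
by case: n n0 {xn1} => // n _ /eqP.
Qed.

Lemma pvalN x : x != 0 -> v (- x) = v x.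
Proof.
have vN1 : v (-1) = 0 by apply: (@pval_unity _ 2) => //; rewrite sqrrN expr1n.
by move=> x0; rewrite -mulN1r pvalM ?oppr_eq0 ?oner_eq0 // vN1 add0r.
Qed.

Lemma pvalV x : x != 0 -> v x^-1 = - v x.
Proof.
move=> x0; have := pvalM x0 (invr_neq0 x0).
by rewrite mulfV // pval1 => /eqP; rewrite eq_sym addrC addr_eq0 => /eqP.
Qed.

Lemma unit_not_val_ge r (x : algC) : 0 < r -> x != 0 -> v x = 0 -> ~ val_ge v r x.
Proof. by move=> r0 /eqP x0 vx0 [//|]; rewrite vx0 leNgt r0. Qed.

Lemma val_ge_le r s x : r <= s -> val_ge v s x -> val_ge v r x.
Proof. by move=> rs [->|h]; [left|right; apply: le_trans h]. Qed.

Lemma val_geD r x y : val_ge v r x -> val_ge v r y -> val_ge v r (x + y).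
Proof.
move=> [->|hx]; first by rewrite add0r.
move=> [->|hy]; first by rewrite addr0; right.
have [->|x0] := eqVneq x 0; first by rewrite add0r; right.
have [->|y0] := eqVneq y 0; first by rewrite addr0; right.
have [|xy0] := eqVneq (x + y) 0; first by left.
case: hv => _ vD _; right; apply: le_trans (vD _ _ x0 y0 xy0).
by rewrite le_min hx hy.
Qed.

Lemma val_geN r x : val_ge v r x -> val_ge v r (- x).
Proof.
have [->|x0] := eqVneq x 0; first by rewrite oppr0; left.
by move=> [x0'|h]; [move: x0; rewrite x0' eqxx | right; rewrite pvalN].
Qed.

Lemma val_geB r x y : val_ge v r x -> val_ge v r y -> val_ge v r (x - y).
Proof. by move=> hx /val_geN; apply: val_geD. Qed.

Lemma val_geM r s x y : val_ge v r x -> val_ge v s y -> val_ge v (r + s) (x * y).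
Proof.
have [->|x0] := eqVneq x 0; first by rewrite mul0r; left.
have [->|y0] := eqVneq y 0; first by rewrite mulr0; left.
move=> [/eqP|hx]; first by rewrite (negbTE x0).
move=> [/eqP|hy]; first by rewrite (negbTE y0).
by right; rewrite pvalM // lerD.
Qed.

Lemma val_geMl r x y : val_ge v 0 x -> val_ge v r y -> val_ge v r (x * y).
Proof. by rewrite -{2}[r]add0r; apply: val_geM. Qed.

Lemma val_geMr r x y : val_ge v r x -> val_ge v 0 y -> val_ge v r (x * y).
Proof. by rewrite -{2}[r]addr0; apply: val_geM. Qed.

Lemma val_ge_sum r I (s : seq I) (P : pred I) (F : I -> algC) :
  (forall i, P i -> val_ge v r (F i)) -> val_ge v r (\sum_(i <- s | P i) F i).
Proof. by move=> h; apply: (big_ind (val_ge v r)) => //; [left | apply: val_geD]. Qed.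

Lemma val_geX r x n : val_ge v r x -> val_ge v (r *+ n) (x ^+ n).
Proof.
move=> h; elim: n => [|n IH]; first by right; rewrite expr0 pval1.
by rewrite exprS mulrS; apply: val_geM.
Qed.

Lemma val_ge0X x n : val_ge v 0 x -> val_ge v 0 (x ^+ n).
Proof. by move/(val_geX n); rewrite mul0rn. Qed.

Lemma val_ge_nat (m : nat) : val_ge v 0 m%:R.
Proof.
have h1 : val_ge v 0 1 by right; rewrite pval1.
by elim: m => [|m IH]; [left | rewrite -natr1; apply: val_geD].
Qed.

Lemma val_ge_sign n : val_ge v 0 ((-1) ^+ n : algC).
Proof. by apply/val_ge0X/val_geN; apply: (val_ge_nat 1). Qed.

End Valuation.

Section PrimeValuation.
Variables (p : nat) (v : algC -> rat).
Hypotheses (hv : padic_valuation p v) (pp : prime p).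

Lemma val_ge_pX N : val_ge v N%:R (p%:R ^+ N : algC).
Proof. by right; rewrite (pvalX hv) ?(pvalp hv) ?pnatr_eq0 -?lt0n ?prime_gt0. Qed.

Lemma val_ge_natX (N z : nat) : (p ^ N %| z)%N -> val_ge v N%:R (z%:R : algC).
Proof.
move=> /dvdnP [w ->]; rewrite natrM natrX -[N%:R]add0r.
by apply: (val_geM hv (val_ge_nat hv w)); apply: val_ge_pX.
Qed.

Lemma val_ge_cong (x y : nat) : x = y %[mod p] -> val_ge v 1 (x%:R - y%:R : algC).
Proof.
wlog le_yx : x y / (y <= x)%N => [hwlog xy|xy].
  have [/hwlog|/ltnW] := leqP y x; first exact.
  by move/hwlog => /(_ (esym xy)) /(val_geN hv); rewrite opprB.
rewrite -natrB //; apply: (@val_ge_natX 1).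
by rewrite expn1 -eqn_mod_dvd // xy.
Qed.

Lemma pval_coprime (m : nat) : coprime m p -> v m%:R = 0.
Proof.
move=> cmp; have m0 : (m%:R : algC) != 0.
  by rewrite pnatr_eq0; apply: contraTneq cmp => ->; rewrite /coprime gcd0n; case: eqP pp => // ->.
have [a _ /dvdnP [q epq]] := Bezoutl m (prime_gt0 pp).
rewrite gcdnC (eqP cmp) in epq.
have vm_ge0 : 0 <= v m%:R by case: (val_ge_nat hv m) => // /eqP; rewrite (negbTE m0).
apply/eqP; rewrite eq_le vm_ge0 andbT leNgt; apply/negP => vm_gt0.
apply: (unit_not_val_ge (r := Num.min 1 (v m%:R)) _ (oner_neq0 _) (pval1 hv)); first by rewrite lt_min ltr01.
suff : val_ge v (Num.min 1 (v m%:R)) (q%:R * p%:R - a%:R * m%:R).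
  by rewrite -!natrM -epq natrD addrK.
apply: (val_geB hv).
  by apply: (val_geMl hv (val_ge_nat hv q)); right; rewrite (pvalp hv) ge_min lexx.
by apply: (val_geMl hv (val_ge_nat hv a)); right; rewrite ge_min lexx orbT.
Qed.

Lemma val_ge_inv2 : odd p -> val_ge v 0 (2^-1 : algC).
Proof.
move=> po; have n20 : (2 : algC) != 0 by rewrite pnatr_eq0.
by right; rewrite (pvalV hv) // (pval_coprime (m := 2)) ?oppr0 // coprime2n.
Qed.

Lemma expn_mod_pred a m : ~~ (p %| a)%N -> (a ^ m = a ^ (m %% p.-1) %[mod p])%N.
Proof.
move=> pa; have ap : coprime a p by rewrite coprime_sym prime_coprime.
have := Euler_exp_totient ap; rewrite totient_prime // => a1.
rewrite {1}(divn_eq m p.-1) expnD (mulnC (m %/ p.-1)%N) expnM -modnMml -modnXm a1.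
by rewrite modnXm exp1n modnMml mul1n.
Qed.

(* A [(p-1)]-th root of unity congruent to [1] is [1]: otherwise
   [sum_(i < p-1) (z^i - 1) = -(p - 1)] would be divisible by [z - 1]. *)
Lemma unity_root_cong1 (z : algC) r : z ^+ p.-1 = 1 -> 0 < r -> val_ge v r (z - 1) -> z = 1.
Proof.
move=> zp r0 hz; apply/eqP/negPn/negP => z1.
have p1_gt0 : (0 < p.-1)%N by have := prime_gt1 pp; lia.
have p1_neq0 : (p.-1)%:R != 0 :> algC by rewrite pnatr_eq0 -lt0n.
apply: (unit_not_val_ge r0 p1_neq0 (pval_coprime (coprimePn (prime_gt0 pp)))).
have hs : \sum_(i < p.-1) z ^+ i = 0.
  by have /eqP := subrX1 z p.-1; rewrite zp subrr eq_sym mulf_eq0 subr_eq0 (negbTE z1) => /eqP.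
have : val_ge v r (\sum_(i < p.-1) (z ^+ i - 1)).
  apply: (val_ge_sum hv) => i _; rewrite subrX1; apply: (val_geMr hv hz).
  by apply: (val_ge_sum hv) => j _; apply: (val_ge0X hv); right; rewrite (pval_unity hv p1_gt0 zp).
by rewrite sumrB hs sumr_const card_ord sub0r => /(val_geN hv); rewrite opprK.
Qed.

End PrimeValuation.

Section Teichmuller.
Variables (p : nat) (v : algC -> rat) (omega : nat -> algC).
Hypotheses (hv : padic_valuation p v) (pp : prime p) (ht : teichmuller p v omega).

Lemma omega_unity a : ~~ (p %| a)%N -> omega a ^+ p.-1 = 1.
Proof. by move=> pa; have [_ /(_ pa) []] := ht a. Qed.

Lemma omegaX_mod a m : ~~ (p %| a)%N -> omega a ^+ m = omega a ^+ (m %% p.-1).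
Proof.
by move=> pa; rewrite {1}(divn_eq m p.-1) exprD mulnC exprM omega_unity // expr1n mul1r.
Qed.

Lemma val_ge_omegaV a n : ~~ (p %| a)%N -> val_ge v 0 (omega a ^- n).
Proof.
move=> pa; have p1_gt0 : (0 < p.-1)%N by have := prime_gt1 pp; lia.
right; rewrite (pval_unity hv p1_gt0) //.
by rewrite exprVn -exprM mulnC exprM omega_unity // expr1n invr1.
Qed.

Lemma omega1 b : (b %% p = 1)%N -> omega b = 1.
Proof.
move=> bp; have pb : ~~ (p %| b)%N by rewrite /dvdn bp.
have b1 : val_ge v 1 (b%:R - 1 : algC).
  by apply: (val_ge_cong hv pp (y := 1)); rewrite bp modn_small ?prime_gt1.
have [_ /(_ pb) [zp [e|hz]]] := ht b.
  by apply: (unity_root_cong1 hv pp zp ltr01); rewrite e.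
apply: (unity_root_cong1 (r := Num.min 1 (v (omega b - b%:R))) hv pp zp).
  by rewrite lt_min hz ltr01.
have -> : omega b - 1 = (omega b - b%:R) + (b%:R - 1) by rewrite addrA subrK.
apply: (val_geD hv).
  by right; rewrite ge_min lexx orbT.
by apply: val_ge_le b1; rewrite ge_min lexx.
Qed.

End Teichmuller.

Section DirichletCharacter.
Variables (N : nat) (psi : nat -> algC).
Hypothesis hd : dirichlet_char N psi.

Lemma dchar_gt0 : (0 < N)%N. Proof. by case: hd. Qed.
Lemma dcharM a b : psi (a * b)%N = psi a * psi b. Proof. by case: hd. Qed.
Lemma dchar0 a : ~~ coprime a N -> psi a = 0.
Proof. by case: hd => _ _ _ nz0; rewrite -nz0 negbK => /eqP. Qed.

Lemma dchar_per a t : psi (a + N * t)%N = psi a.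
Proof.
case: hd => _ _ per _; elim: t => [|t IH]; first by rewrite muln0 addn0.
by rewrite mulnS addnCA addnC per IH.
Qed.

Lemma dchar_cong a b : a = b %[mod N] -> psi a = psi b.
Proof.
have psi_mod c : psi (c %% N) = psi c by rewrite [in RHS](divn_eq c N) addnC mulnC dchar_per.
by move=> ab; rewrite -psi_mod ab psi_mod.
Qed.

Lemma dchar1 : psi 1 = 1.
Proof.
have h1 : psi 1 != 0 by case: hd => _ _ _ ->; rewrite coprime1n.
by apply: (mulfI h1); rewrite -dcharM mulr1.
Qed.

Lemma val_ge_dchar (p : nat) (v : algC -> rat) (hv : padic_valuation p v) a :
  val_ge v 0 (psi a).
Proof.
have [ca|/dchar0 ->] := boolP (coprime a N); last by left.
have tN : (0 < totient N)%N by rewrite totient_gt0 dchar_gt0.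
right; rewrite (pval_unity hv tN) //.
have psiX k : psi (a ^ k)%N = psi a ^+ k.
  by elim: k => [|k IH]; rewrite ?dchar1 // expnS exprS dcharM IH.
by rewrite -psiX -dchar1; apply/dchar_cong/Euler_exp_totient.
Qed.

End DirichletCharacter.

Lemma shift_cong1 F K a : (0 < F)%N -> (0 < K)%N -> (0 < a)%N ->
  (gcdn F K %| a - 1)%N -> exists t, (a + F * t = 1 %[mod K])%N.
Proof.
move=> F0 K0 a0 hg; case: (egcdnP K F0) => km kn hk _.
set g := gcdn F K in hk hg.
have hu : (g %| (K - 1) * a + 1)%N.
  have e : ((K - 1) * a + 1 + (a - 1) = K * a)%N by nia.
  have : (g %| K * a)%N by apply/dvdn_mulr/dvdn_gcdr.
  by rewrite -e dvdn_addl.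
set u := ((K - 1) * a + 1)%N in hu.
exists (km * (u %/ g))%N.
have hw : (u %/ g * g = u)%N by rewrite divnK.
set w := (u %/ g)%N in hw *.
have -> : (a + F * (km * w) = K * (a + kn * w) + 1)%N.
  have e2 : (F * (km * w) = kn * K * w + u)%N by rewrite mulnCA mulnA hk -hw; nia.
  by rewrite e2 /u; nia.
by rewrite mulnC modnMDl.
Qed.

Lemma coprime_lcm b f p : coprime b (lcmn f p) = coprime b f && coprime b p.
Proof.
apply/idP/andP => [cb|[cf cp]].
  by split; apply: coprime_dvdr cb; [apply: dvdn_lcml | apply: dvdn_lcmr].
apply: (@coprime_dvdr _ (f * p)); last by rewrite coprimeMr cf.
by rewrite dvdn_lcm dvdn_mulr // dvdn_mull.
Qed.

Lemma eq_mod_dvd d n a b : (d %| n)%N -> a = b %[mod n] -> a = b %[mod d].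
Proof. by move=> dn ab; rewrite -(modn_dvdm a dn) ab modn_dvdm. Qed.

Section Conductor.
Variables (p : nat) (v : algC -> rat) (omega : nat -> algC)
  (f : nat) (chi : nat -> algC) (chin : nat -> nat -> algC) (fn : nat -> nat).
Hypotheses (hv : padic_valuation p v) (pp : prime p) (ht : teichmuller p v omega).
Hypotheses (hchi : primitive_char f chi) (hap : assoc_primitive p f chi omega chin fn).

Let L := lcmn f p.
Let hdchi : dirichlet_char f chi := hchi.1.
Let f_gt0 : (0 < f)%N := dchar_gt0 hdchi.
Let L_gt0 : (0 < L)%N. Proof. by rewrite lcmn_gt0 f_gt0 prime_gt0. Qed.

Lemma chin_dchar m : dirichlet_char (fn m) (chin m).
Proof. by case: (hap m) => -[]. Qed.

Lemma chinE m a : coprime a L -> chin m a = chi a * omega a ^- m.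
Proof. by case: (hap m) => _; apply. Qed.

Lemma chin_cong1 m b : b = 1 %[mod L] -> chin m b = 1.
Proof.
move=> hb; have cb : coprime b L by rewrite -coprime_modl hb coprime_modl coprime1n.
rewrite chinE //; have [-> ->] : chi b = 1 /\ omega b = 1.
  split; last apply: (omega1 hv pp ht).
    by rewrite -(dchar1 hdchi); apply/(dchar_cong hdchi)/(eq_mod_dvd (dvdn_lcml f p)).
  by rewrite (eq_mod_dvd (dvdn_lcmr f p) hb) modn_small ?prime_gt1.
by rewrite expr1n invr1 mulr1.
Qed.

(* If [fn m] did not divide [L], [chin m] would be induced from the proper
   divisor [gcd(fn m, L)] of its conductor. *)
Lemma conductor_dvd m : (fn m %| L)%N.
Proof.
have [hd hprim] := (hap m).1; have F0 := dchar_gt0 hd.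
set F := fn m in hd hprim F0 *; set d := gcdn F L.
have [lt|gt|<-] := ltngtP d F; last exact: dvdn_gcdr.
  case: (hprim d (dvdn_gcdl F L) lt) => a ca ha.
  have a0 : (0 < a)%N.
    case: a ca ha => // /eqP; rewrite /coprime gcd0n => F1.
    by move: lt; rewrite /d F1 gcd1n.
  have hda : (d %| a - 1)%N by rewrite -eqn_mod_dvd // ha.
  have [t hat] := shift_cong1 F0 L_gt0 a0 hda.
  by rewrite -(dchar_per hd a t); apply: chin_cong1.
by move: gt; rewrite ltnNge dvdn_leq ?dvdn_gcdl.
Qed.

(* Otherwise [chi] would be induced from [f / q]: lift [a = 1 mod f/q] to
   [b = a mod f] with [b = 1 mod lcm(fn m, p)], where [chi b = 1]. *)
Lemma prime_dvd_conductor m q : prime q -> (q %| f)%N -> q != p -> (q %| fn m)%N.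
Proof.
move=> qp qf qnp; apply: contraT => nqF.
have hd := chin_dchar m; have F0 := dchar_gt0 hd.
set F := fn m in hd nqF F0 *; set d := (f %/ q)%N.
have fqd : f = (d * q)%N by rewrite divnK.
have df : (d %| f)%N by rewrite fqd dvdn_mulr.
have dlt : (d < f)%N by apply: ltn_Pdiv; rewrite ?prime_gt1.
case: (hchi.2 d df dlt) => a ca ha.
have a0 : (0 < a)%N.
  case: a ca ha => // /eqP; rewrite /coprime gcd0n => f1.
  by move: qf qp; rewrite f1 dvdn1 => /eqP ->.
set K := lcmn F p.
have K0 : (0 < K)%N by rewrite lcmn_gt0 F0 prime_gt0.
have cqK : coprime q K.
  rewrite prime_coprime //; apply: contra nqF => qK.
  have : (q %| F * p)%N by apply: dvdn_trans qK _; rewrite dvdn_lcm dvdn_mulr // dvdn_mull.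
  by rewrite Euclid_dvdM // => /orP [//|]; rewrite dvdn_prime2 // (negbTE qnp).
have hg : (gcdn f K %| a - 1)%N.
  have gd : (gcdn f K %| d)%N.
    have cgq : coprime (gcdn f K) q by apply: coprime_dvdl (dvdn_gcdr f K) _; rewrite coprime_sym.
    by rewrite -(Gauss_dvdl _ cgq) -fqd dvdn_gcdl.
  by apply: dvdn_trans gd _; rewrite -eqn_mod_dvd // ha.
have [t hb] := shift_cong1 f_gt0 K0 a0 hg.
set b := (a + f * t)%N in hb.
have hbp : (b %% p = 1)%N.
  by rewrite (eq_mod_dvd (dvdn_lcmr F p) hb) modn_small ?prime_gt1.
have cb : coprime b L.
  rewrite coprime_lcm -[coprime b p]coprime_modl hbp coprime1n andbT.
  by rewrite /b -coprime_modl mulnC addnC modnMDl coprime_modl.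
have := chinE m cb; rewrite (omega1 hv pp ht hbp) expr1n invr1 mulr1 /b (dchar_per hdchi) => <-.
by rewrite -(dchar1 hd); apply/(dchar_cong hd)/(eq_mod_dvd (dvdn_lcml F p)).
Qed.

Lemma chinE_prime_to_p m a : ~~ (p %| a)%N -> chin m a = chi a * omega a ^- m.
Proof.
move=> pa; have cap : coprime a p by rewrite coprime_sym prime_coprime.
have [caL|naL] := boolP (coprime a L); first exact: chinE.
have naf : ~~ coprime a f by move: naL; rewrite coprime_lcm cap andbT.
rewrite (dchar0 hdchi naf) mul0r (dchar0 (chin_dchar m)) //.
have g1 : (1 < gcdn a f)%N.
  by move: naf; rewrite /coprime ltn_neqAle eq_sym => ->; rewrite gcdn_gt0 f_gt0 orbT.
set q := pdiv (gcdn a f); have qp : prime q by apply: pdiv_prime.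
have qa : (q %| a)%N := dvdn_trans (pdiv_dvd _) (dvdn_gcdl _ _).
have qf : (q %| f)%N := dvdn_trans (pdiv_dvd _) (dvdn_gcdr _ _).
have qnp : q != p by apply: contraNneq pa => <-.
apply/negP => /eqP caF; have : (q %| gcdn a (fn m))%N.
  by rewrite dvdn_gcd qa prime_dvd_conductor.
by rewrite caF dvdn1 => /eqP q1; move: qp; rewrite q1.
Qed.

End Conductor.

Lemma mul_bin_sub m l i : (i <= l)%N -> (l <= m)%N ->
  ('C(m, i) * 'C(m - i, l - i) = 'C(m, l) * 'C(l, i))%N.
Proof.
move=> il lm; apply/eqP.
have fact_gt0 : (0 < i`! * (l - i)`! * (m - l)`!)%N by rewrite !muln_gt0 !fact_gt0.
rewrite -(eqn_pmul2r fact_gt0); apply/eqP; transitivity m`!.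
  rewrite -(bin_fact (leq_trans il lm)) -(bin_fact (_ : l - i <= m - i)%N); last lia.
  by rewrite (_ : m - i - (l - i) = m - l)%N; [ring | lia].
by rewrite -(bin_fact lm) -(bin_fact il); ring.
Qed.

(* Appell property of the polynomials [P_l(x) = sum_i C(l,i) x^(l-i) e_i]:
   [sum_l C(m,l) y^(m-l) P_l(x) = P_m(x + y)]. *)
Lemma appell_shift (R : comNzRingType) (e : nat -> R) m (x y : R) :
  \sum_(l < m.+1) 'C(m, l)%:R * y ^+ (m - l) *
       (\sum_(i < l.+1) 'C(l, i)%:R * x ^+ (l - i) * e i)
  = \sum_(i < m.+1) 'C(m, i)%:R * (x + y) ^+ (m - i) * e i.
Proof.
pose T i l := ('C(m, l) * 'C(l, i))%:R * y ^+ (m - l) * x ^+ (l - i) * e i.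
transitivity (\sum_(0 <= l < m.+1) \sum_(0 <= i < l.+1) T i l).
  rewrite big_mkord; apply: eq_bigr => l _.
  rewrite big_mkord mulr_sumr; apply: eq_bigr => i _.
  by rewrite /T natrM; ring.
transitivity (\sum_(0 <= i < m.+1) \sum_(i <= l < m.+1) T i l); last first.
  rewrite big_mkord; apply: eq_bigr => -[i /= im] _.
  rewrite addrC exprDn mulr_sumr mulr_suml.
  rewrite -{1}[i]add0n big_addn (_ : m.+1 - i = (m - i).+1)%N; last lia.
  rewrite big_mkord; apply: eq_bigr => -[k /= km] _.
  rewrite /T -(mul_bin_sub (_ : i <= k + i)%N (_ : k + i <= m)%N); [|lia|lia].
  rewrite (_ : k + i - i = k)%N; last lia.
  rewrite (_ : m - (k + i) = m - i - k)%N; last lia.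
  by rewrite natrM -mulr_natr; ring.
symmetry; under eq_bigr => i _ do rewrite (big_nat_widenl i 0) //.
rewrite (exchange_big_dep_nat xpredT) //.
apply: eq_big_nat => l /andP [_ lm].
by rewrite [RHS](big_nat_widen 0 l.+1 m.+1).
Qed.

Lemma sum_nat_shift (R : nmodType) (g : nat -> R) a b :
  \sum_(a.+1 <= i < (a + b).+1) g i = \sum_(1 <= j < b.+1) g (a + j)%N.
Proof.
rewrite (_ : a.+1 = 1 + a)%N // big_addn (_ : (a + b).+1 - a = b.+1)%N; last lia.
by apply: eq_bigr => j _; rewrite addnC.
Qed.

Lemma sum_nat_split3 (R : nmodType) (g : nat -> R) K F :
  \sum_(1 <= i < (K + (F + F)).+1) g i = \sum_(1 <= i < K.+1) g i +
    \sum_(1 <= j < F.+1) g (K + j)%N + \sum_(1 <= j < F.+1) g (K + (F + j))%N.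
Proof.
rewrite (@big_cat_nat _ _ _ K.+1 1 (K + (F + F)).+1) //=; last lia.
rewrite (sum_nat_shift g K (F + F)) -addrA; congr (_ + _).
rewrite (@big_cat_nat _ _ _ F.+1 1 (F + F).+1) //=; last lia.
by congr (_ + _); rewrite (sum_nat_shift (fun j => g (K + j)%N) F F).
Qed.

Lemma sum_multiples (R : nmodType) (g : nat -> R) p q : (0 < p)%N ->
  \sum_(1 <= a < (p * q).+1 | (p %| a)%N) g a = \sum_(1 <= b < q.+1) g (p * b)%N.
Proof.
move=> p0; elim: q => [|q IH]; first by rewrite muln0 !big_geq.
rewrite big_mkcond (@big_cat_nat _ _ _ (p * q).+1 1 (p * q.+1).+1) //=; last first.
  by rewrite ltnS leq_mul2l leqnSn orbT.
rewrite -big_mkcond IH [in RHS]big_nat_recr //=; congr (_ + _).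
rewrite mulnS addnC (sum_nat_shift (fun a => if (p %| a)%N then g a else 0) (p * q) p).
rewrite big_nat_recr //= dvdn_addr ?dvdn_mulr // dvdnn.
rewrite big1_seq ?add0r // => j /andP [_]; rewrite mem_index_iota => /andP [j1 jp].
rewrite dvdn_addr ?dvdn_mulr //.
by case: ifP => // pj; have := dvdn_leq j1 pj; lia.
Qed.

Definition euler_poly (psi : nat -> algC) (F m : nat) (x : algC) :=
  \sum_(i < m.+1) 'C(m, i)%:R * x ^+ (m - i) * gen_euler psi F i.

Definition alt_sum (psi : nat -> algC) (m K : nat) : algC :=
  \sum_(1 <= a < K.+1) (-1) ^+ a * psi a * (a%:R) ^+ m.

Definition alt_sum_coprime (p : nat) (psi : nat -> algC) (m K : nat) : algC :=
  \sum_(1 <= a < K.+1 | ~~ (p %| a)%N) (-1) ^+ a * psi a * (a%:R) ^+ m.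

Section EulerNumbers.
Variables (psi : nat -> algC) (F : nat).

Lemma size_euler_seq m : size (euler_seq psi F m) = m.+1.
Proof. by elim: m => [|m IH] //=; rewrite size_rcons IH. Qed.

Lemma nth_euler_seq m i : (i <= m)%N -> nth 0 (euler_seq psi F m) i = gen_euler psi F i.
Proof.
elim: m i => [|m IH] i; first by rewrite leqn0 => /eqP ->.
rewrite leq_eqVlt => /orP [/eqP ->|im] //.
by rewrite /= nth_rcons size_euler_seq im IH.
Qed.

Lemma gen_eulerS m : gen_euler psi F m.+1 = euler_rhs psi F m.+1 -
  2^-1 * \sum_(i < m.+1) 'C(m.+1, i)%:R * (F%:R) ^+ (m.+1 - i) * gen_euler psi F i.
Proof.
rewrite {1}/gen_euler /= nth_rcons size_euler_seq ltnn eqxx.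
by congr (_ - 2^-1 * _); apply: eq_bigr => i _; rewrite nth_euler_seq // -ltnS.
Qed.

Lemma euler_rhsE m : 2 * euler_rhs psi F m = gen_euler psi F m + euler_poly psi F m F%:R.
Proof.
rewrite /euler_poly big_ord_recr /= subnn expr0 binn mulr1 mul1r.
case: m => [|m]; first by rewrite big_ord0 add0r mulr2n mulrDl mul1r.
by rewrite gen_eulerS; field.
Qed.

Lemma shifted_sumE m y :
  2 * \sum_(1 <= a < F.+1) (-1) ^+ a * psi a * (a%:R + y) ^+ m
  = euler_poly psi F m y + euler_poly psi F m (F%:R + y).
Proof.
under eq_bigr => a _ do rewrite addrC exprDn mulr_sumr.
rewrite exchange_big /= mulr_sumr.
transitivity (\sum_(l < m.+1) 'C(m, l)%:R * y ^+ (m - l) * (2 * euler_rhs psi F l)).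
  apply: eq_bigr => l _; rewrite /euler_rhs !mulr_sumr; apply: eq_bigr => a _.
  by rewrite -mulr_natl; ring.
under eq_bigr => l _ do rewrite euler_rhsE mulrDr.
by rewrite big_split /= !appell_shift.
Qed.

End EulerNumbers.

Section EulerSums.
Variables (psi : nat -> algC) (F : nat).
Hypotheses (hd : dirichlet_char F psi) (F_odd : odd F).

(* Induction on [s]: the block [K < a <= K + 2F] contributes
   [- S(K) + S(K + F)], with [S(y) = sum_(a <= F) (-1)^a psi a (a + y)^m],
   since [K] is odd and [K + F] even. *)
Lemma alt_sum_odd_period m s :
  2 * alt_sum psi m (F * s.*2.+1) = gen_euler psi F m + euler_poly psi F m (F * s.*2.+1)%:R.
Proof.
elim: s => [|s IH]; first by rewrite muln1 -euler_rhsE.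
set K := (F * s.*2.+1)%N in IH *.
have K_odd : odd K by rewrite /K oddM F_odd /= odd_double.
have -> : (F * (s.+1).*2.+1 = K + (F + F))%N by rewrite /K doubleS; lia.
pose g a := (-1) ^+ a * psi a * (a%:R : algC) ^+ m.
rewrite /alt_sum (sum_nat_split3 g) -/(alt_sum psi m K) !mulrDr IH.
have -> : \sum_(1 <= j < F.+1) g (K + j)%N =
    - \sum_(1 <= a < F.+1) (-1) ^+ a * psi a * (a%:R + K%:R) ^+ m.
  rewrite -sumrN; apply: eq_bigr => b _.
  rewrite /g exprD -[(-1) ^+ K]signr_odd K_odd expr1 natrD addrC.
  by rewrite [(K + b)%N]addnC (dchar_per hd); ring.
have -> : \sum_(1 <= j < F.+1) g (K + (F + j))%N =
    \sum_(1 <= a < F.+1) (-1) ^+ a * psi a * (a%:R + (F + K)%:R) ^+ m.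
  apply: eq_bigr => b _; rewrite /g addnA exprD -[(-1) ^+ (K + F)]signr_odd.
  rewrite oddD K_odd F_odd expr0 mul1r [(K + F + b)%N]addnC.
  rewrite (_ : K + F = F * s.*2.+2)%N; last by rewrite /K; lia.
  by rewrite (dchar_per hd) natrD /K; congr (_ * (_ + _%:R) ^+ _); lia.
rewrite mulrN !shifted_sumE natrD.
have -> : (F%:R + (F%:R + K%:R) : algC) = (K + (F + F))%:R by rewrite !natrD; ring.
ring.
Qed.

End EulerSums.

Section EulerCongruences.
Variables (p : nat) (v : algC -> rat) (psi : nat -> algC) (F : nat).
Hypotheses (hv : padic_valuation p v) (pp : prime p) (p_odd : odd p).
Hypotheses (hd : dirichlet_char F psi) (F_odd : odd F).

Lemma val_ge_euler_rhs m : val_ge v 0 (euler_rhs psi F m).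
Proof.
apply: (val_ge_sum hv) => a _; apply: (val_geMl hv); last exact/(val_ge0X hv)/(val_ge_nat hv).
by apply: (val_geMl hv); [apply: (val_ge_sign hv) | apply: (val_ge_dchar hd hv)].
Qed.

Lemma val_ge_gen_euler m : val_ge v 0 (gen_euler psi F m).
Proof.
elim/ltn_ind: m => -[_|m IH]; first exact: val_ge_euler_rhs.
rewrite gen_eulerS; apply: (val_geB hv); first exact: val_ge_euler_rhs.
apply: (val_geMl hv); first exact: (val_ge_inv2 hv pp).
apply: (val_ge_sum hv) => i _; apply: (val_geMl hv); last exact: IH.
by apply: (val_geMl hv (val_ge_nat hv _)); apply/(val_ge0X hv)/(val_ge_nat hv).
Qed.

Lemma alt_sum_cong m M N : (F %| M)%N -> odd M -> (p ^ N %| M)%N ->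
  val_ge v N%:R (alt_sum psi m M - gen_euler psi F m).
Proof.
move=> FM M_odd pM.
have [s Ms] : exists s, M = (F * s.*2.+1)%N.
  have ho : odd (M %/ F) by move: M_odd; rewrite -{1}(divnK FM) oddM => /andP [].
  exists (M %/ F)./2; have := odd_double_half (M %/ F).
  by rewrite ho add1n => ->; rewrite mulnC divnK.
have n20 : (2 : algC) != 0 by rewrite pnatr_eq0.
have -> : alt_sum psi m M - gen_euler psi F m =
    2^-1 * (euler_poly psi F m M%:R - gen_euler psi F m).
  apply: (mulfI n20); rewrite mulrA mulfV // mul1r mulrBr Ms alt_sum_odd_period //.
  ring.
apply: (val_geMl hv); first exact: (val_ge_inv2 hv pp).
rewrite /euler_poly big_ord_recr /= subnn expr0 binn mulr1 mul1r addrK.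
apply: (val_ge_sum hv) => -[i /= im] _; rewrite -mulrA; apply: (val_geMl hv (val_ge_nat hv _)).
apply: (val_geMr hv); last exact: val_ge_gen_euler.
rewrite (_ : m - i = (m - i).-1.+1)%N ?exprS; last lia.
by apply: (val_geMr hv); [apply: (val_ge_natX hv pp) | apply/(val_ge0X hv)/(val_ge_nat hv)].
Qed.

(* Splitting off the multiples [a = p b] of [p] in [alt_sum] relates the sums
   up to [L p^(N+1)] and [L p^N], both congruent to [E_m]. *)
Lemma eps_cong m L N : (F %| L)%N -> odd L -> (0 < m)%N ->
  val_ge v N.+1%:R ((1 - psi p * p%:R ^+ m) * gen_euler psi F m
                     - alt_sum_coprime p psi m (L * p ^ N.+1)).
Proof.
move=> FL L_odd m_gt0.
set M1 := (L * p ^ N)%N; set M := (L * p ^ N.+1)%N.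
have M1_odd : odd M1 by rewrite /M1 oddM L_odd oddX p_odd orbT.
have eM : M = (p * M1)%N by rewrite /M /M1 expnS; ring.
have hS : alt_sum psi m M = alt_sum_coprime p psi m M + psi p * p%:R ^+ m * alt_sum psi m M1.
  rewrite /alt_sum /alt_sum_coprime (bigID (fun a => (p %| a)%N)) /= addrC; congr (_ + _).
  rewrite eM sum_multiples ?prime_gt0 // mulr_sumr; apply: eq_bigr => b _.
  rewrite (dcharM hd) natrM exprMn exprM -[(-1) ^+ p]signr_odd p_odd expr1.
  by ring.
have -> : (1 - psi p * p%:R ^+ m) * gen_euler psi F m - alt_sum_coprime p psi m M =
    - (alt_sum psi m M - gen_euler psi F m)
    + psi p * p%:R ^+ m * (alt_sum psi m M1 - gen_euler psi F m).
  by rewrite hS; ring.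
apply: (val_geD hv).
  apply/(val_geN hv)/alt_sum_cong; [exact: dvdn_mulr | | exact: dvdn_mull].
  by rewrite eM oddM p_odd.
rewrite -mulrA; apply: (val_geMl hv (val_ge_dchar hd hv _)).
apply: (val_ge_le (s := (m + N)%:R)); first by rewrite ler_nat; lia.
rewrite natrD; apply: (val_geM hv); first exact: (val_ge_pX hv pp).
by apply: alt_sum_cong; [exact: dvdn_mulr | | exact: dvdn_mull].
Qed.

End EulerCongruences.

Lemma DeltaB c k (a b : nat -> algC) n :
  Delta c k (fun m => a m - b m) n = Delta c k a n - Delta c k b n.
Proof. by rewrite /Delta -sumrB; apply: eq_bigr => j _; rewrite mulrBr. Qed.

Lemma val_ge_Delta p v (hv : padic_valuation p v) r c k (a : nat -> algC) n :
  (forall m, (n <= m)%N -> val_ge v r (a m)) -> val_ge v r (Delta c k a n).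
Proof.
move=> ha; apply: (val_ge_sum hv) => j _; apply: (val_geMl hv); last exact/ha/leq_addr.
exact: (val_geMl hv (val_ge_nat hv _) (val_ge_sign hv _)).
Qed.

Section DeltaCongruence.
Variables (p : nat) (v : algC -> rat) (omega : nat -> algC)
  (f : nat) (chi : nat -> algC) (chin : nat -> nat -> algC) (fn : nat -> nat).
Hypotheses (hv : padic_valuation p v) (pp : prime p) (p_odd : odd p).
Hypotheses (ht : teichmuller p v omega) (hchi : primitive_char f chi) (f_odd : odd f).
Hypothesis hap : assoc_primitive p f chi omega chin fn.
Variables (c k : nat).
Hypothesis hc : (p.-1 %| c)%N.

Let T M m := alt_sum_coprime p (chin m) m M.

Lemma eps_cong_alt_sum m : (0 < m)%N ->
  val_ge v k.+1%:R (eps p chin fn m - T (lcmn f p * p ^ k.+1) m).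
Proof.
have L_odd : odd (lcmn f p).
  by apply: (@dvdn_odd _ (f * p)); rewrite ?oddM ?f_odd // dvdn_lcm dvdn_mulr // dvdn_mull.
have FL := conductor_dvd hv pp ht hchi hap m.
exact: (eps_cong hv pp p_odd (chin_dchar hap m) (dvdn_odd FL L_odd) k FL L_odd).
Qed.

Lemma Delta_eps_cong m : (0 < m)%N ->
  val_ge v k.+1%:R (Delta c k (eps p chin fn) m - Delta c k (T (lcmn f p * p ^ k.+1)) m).
Proof.
move=> m_gt0; rewrite -DeltaB; apply: (val_ge_Delta hv) => l lm.
by apply: eps_cong_alt_sum; apply: leq_trans lm.
Qed.

(* Binomial expansion of [(a^c)^j] in [Delta]; [omega(a)^-(m + j c)] does not
   depend on [j] because [p - 1] divides [c]. *)
Lemma Delta_alt_sum_coprime M m : Delta c k (T M) m =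
  \sum_(1 <= a < M.+1 | ~~ (p %| a)%N)
     (-1) ^+ a * chi a * omega a ^- m * a%:R ^+ m * (a%:R ^+ c - 1) ^+ k.
Proof.
rewrite /Delta /T /alt_sum_coprime.
under eq_bigr => j _ do rewrite mulr_sumr.
rewrite exchange_big /=; apply: eq_bigr => a pa.
rewrite addrC exprDn mulr_sumr; apply: eq_bigr => j _.
rewrite (chinE_prime_to_p hv pp ht hchi hap) //.
have -> : omega a ^- (m + j * c) = omega a ^- m.
  rewrite (omegaX_mod ht) // [in RHS](omegaX_mod ht) // -modnDmr.
  by rewrite (eqP (_ : (j * c) %% p.-1 == 0)%N) ?addn0 // -/(dvdn _ _) dvdn_mull.
by rewrite exprD mulnC exprM -mulr_natl; ring.
Qed.

(* By Fermat, [a^n = a^n'] and [a^c = 1] modulo [p] for [p] not dividing [a]. *)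
Lemma Delta_alt_sum_coprime_cong M n n' : n = n' %[mod p.-1] ->
  val_ge v k.+1%:R (Delta c k (T M) n - Delta c k (T M) n').
Proof.
move=> nn'; rewrite !Delta_alt_sum_coprime -sumrB.
apply: (val_ge_sum hv) => a pa.
rewrite (omegaX_mod ht _ pa) [in X in _ - X](omegaX_mod ht n' pa) -nn' -(omegaX_mod ht _ pa).
rewrite -mulrBl -mulrBr -mulrA; apply: (val_geMl hv).
  apply: (val_geMl hv); last exact: (val_ge_omegaV hv pp ht).
  exact: (val_geMl hv (val_ge_sign hv _) (val_ge_dchar (hchi.1) hv _)).
rewrite -natr1 addrC; apply: (val_geM hv).
  rewrite -!natrX; apply: (val_ge_cong hv pp).
  by rewrite (expn_mod_pred pp _ pa) [in RHS](expn_mod_pred pp _ pa) nn'.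
apply: (val_geX hv); rewrite -natrX; apply: (val_ge_cong hv pp (y := 1)).
by rewrite (expn_mod_pred pp _ pa) (eqP (_ : c %% p.-1 == 0)%N).
Qed.

End DeltaCongruence.

Lemma val_ge_cong_mod_pow v m x y : val_ge v m%:R (x - y) -> cong_mod_pow v m x y.
Proof. by case=> [/eqP|]; [rewrite subr_eq0 => /eqP; left | right]. Qed.

Unset Implicit Arguments.

Theorem corollary3p2 (p : nat) (v : algC -> rat) (omega : nat -> algC)
    (f : nat) (chi : nat -> algC) (chin : nat -> nat -> algC) (fn : nat -> nat)
    (n n' c k : nat) :
  prime p -> odd p ->
  padic_valuation p v -> teichmuller p v omega ->
  primitive_char f chi -> odd f ->
  assoc_primitive p f chi omega chin fn ->
  (0 < n)%N -> (0 < n')%N -> (0 < c)%N -> (0 < k)%N ->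
  n = n' %[mod p.-1] -> (p.-1 %| c)%N ->
  cong_mod_pow v k.+1 (Delta c k (eps p chin fn) n) (Delta c k (eps p chin fn) n').
Proof.
move=> pp p_odd hv ht hchi f_odd hap n_gt0 n'_gt0 _ _ nn' hc.
apply: val_ge_cong_mod_pow.
pose DT := Delta c k (fun m => alt_sum_coprime p (chin m) m (lcmn f p * p ^ k.+1)).
have -> : Delta c k (eps p chin fn) n - Delta c k (eps p chin fn) n' =
    (Delta c k (eps p chin fn) n - DT n) - (Delta c k (eps p chin fn) n' - DT n')
    + (DT n - DT n') by ring.
apply: (val_geD hv).
  by apply: (val_geB hv); apply: (Delta_eps_cong hv pp p_odd ht hchi f_odd hap).
exact: (Delta_alt_sum_coprime_cong hv pp ht hchi hap k hc).
Qed.
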